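(* Fix integers $d\geq 1$ and $k\geq 1$. For any edge $e$ of $\mathbb{Z}^d$ there exists a unique $z\in(2k\mathbb{Z})^d$, denoted $g(e)$, such that $e$ is an edge of $Q_k^z$. Furthermore, any cycle $(e_1,\dots,e_n)$ in $\mathbb{Z}^d$ contains at least two edges $e_i,e_j$ (with $i\neq j$) such that $g(e_i)=g(e_j)$.
   Context: For $z\in(2k\mathbb{Z})^d$ let $B_k^z=([-k,k]^d\cap\mathbb{Z}^d)+z$, let $E(B_k^z)$ be the set of edges of $\mathbb{Z}^d$ with both endpoints in $B_k^z$, and let $Q_k^z$ be the subgraph of $B_k^z$ with edge set $\{(x,y)\in E(B_k^z):\ \text{there is no }\ell\in\{1,\dots,d\}\text{ with }x_\ell=y_\ell=z_\ell-k\}$. *)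

From mathcomp Require Import all_boot all_order all_algebra.
Set Implicit Arguments. Unset Strict Implicit. Unset Printing Implicit Defensive.
Import Order.TTheory GRing.Theory Num.Theory.
Local Open Scope ring_scope.

Definition point (d : nat) := 'I_d -> int.

Definition adj (d : nat) (x y : point d) : Prop :=
  exists l : 'I_d, `|x l - y l| = 1 /\ forall m : 'I_d, m != l -> x m = y m.

Definition lattice2k (d k : nat) (z : point d) : Prop :=
  forall l : 'I_d, (((2 * k)%N)%:Z %| z l)%Z.

Definition inBox (d k : nat) (z x : point d) : Prop :=
  forall l : 'I_d, z l - k%:Z <= x l /\ x l <= z l + k%:Z.

Definition inQ (d k : nat) (z x y : point d) : Prop :=
  adj x y /\ inBox k z x /\ inBox k z y /\
  ~ (exists l : 'I_d, x l = z l - k%:Z /\ y l = z l - k%:Z).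

From mathcomp Require Import all_boot all_order all_algebra.
From mathcomp Require Import zify.
From Stdlib Require Import FunctionalExtensionality.
Import Order.TTheory GRing.Theory Num.Theory.
Local Open Scope ring_scope.
Set Implicit Arguments. Unset Strict Implicit.

(* An edge {x,y} of Z^d lies in Q_k^z exactly when its upper corner, the
   coordinatewise maximum of x and y, lies in the half-open box
   z + (-k,k]^d; these boxes tile Z^d as z ranges over (2kZ)^d, so g(e) is the
   centre of the box containing the upper corner of e.  In a cycle, pick a
   vertex maximising the coordinate sum: moving along an edge changes that sum
   by exactly the change of the moving coordinate, so this vertex is the upper
   corner of both cycle edges through it, and these two edges have the same
   image under g. *)

Definition edge_top d (x y : point d) : point d := fun m => Num.max (x m) (y m).

Definition coord_sum d (x : point d) : int := \sum_(m < d) x m.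

Definition round2k (k : nat) (a : int) : int :=
  ((a + k%:Z - 1) %/ (2 * k)%N%:Z)%Z * (2 * k)%N%:Z.

Definition box_center d k (x : point d) : point d := fun m => round2k k (x m).

Lemma adj_sym d (x y : point d) : adj x y -> adj y x.
Proof.
case=> l [hl he]; exists l; split; first by rewrite distrC.
by move=> m /he ->.
Qed.

Lemma edge_topC d (x y : point d) : edge_top x y = edge_top y x.
Proof. by apply: functional_extensionality => m; rewrite /edge_top maxC. Qed.

Lemma inQ_edge_top d k (z x y : point d) : adj x y ->
  inQ k z x y <-> forall m, z m - k%:Z < edge_top x y m <= z m + k%:Z.
Proof.
rewrite /edge_top; case=> l [hl he]; split.
- case=> _ [bx [bY nq]] m; have := bx m; have := bY m.
  case: (eqVneq m l) => [->|/he exy]; first lia.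
  have : ~ (x m = z m - k%:Z /\ y m = z m - k%:Z) by move=> h; apply: nq; exists m.
  rewrite exy; lia.
- move=> H; split; first by exists l.
  split; [|split].
  + move=> m; have := H m; case: (eqVneq m l) => [->|/he]; lia.
  + move=> m; have := H m; case: (eqVneq m l) => [->|/he]; lia.
  + by case=> m [h1 h2]; have := H m; rewrite h1 h2; lia.
Qed.

Section Rounding.

Variable k : nat.
Hypothesis k_gt0 : (0 < k)%N.

Lemma dvdz_round2k a : (((2 * k)%N)%:Z %| round2k k a)%Z.
Proof. exact: dvdz_mull. Qed.

Lemma round2k_spec a : round2k k a - k%:Z < a <= round2k k a + k%:Z.
Proof.
rewrite /round2k; set c := (2 * k)%N%:Z.
have c_gt0 : 0 < c by rewrite /c; lia.
have := divz_eq (a + k%:Z - 1) c.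
have := modz_ge0 (a + k%:Z - 1) (lt0r_neq0 c_gt0).
have := ltz_pmod (a + k%:Z - 1) c_gt0.
rewrite /c; lia.
Qed.

Lemma round2k_unique z a : (((2 * k)%N)%:Z %| z)%Z ->
  z - k%:Z < a <= z + k%:Z -> z = round2k k a.
Proof.
move=> /dvdzP [q ->] hza; rewrite /round2k.
have := round2k_spec a; rewrite /round2k; set q' := (_ %/ _)%Z => hq'a.
suff -> : q = q' by [].
have : - (2 * k)%N%:Z < q * (2 * k)%N%:Z - q' * (2 * k)%N%:Z < (2 * k)%N%:Z by lia.
have : 0 < (2 * k)%N%:Z by lia.
set c := (2 * k)%N%:Z; nia.
Qed.

Lemma lattice2k_box_center d (x : point d) : lattice2k k (box_center k x).
Proof. by move=> m; apply: dvdz_round2k. Qed.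

Lemma inQ_box_center d (z x y : point d) : adj x y -> lattice2k k z ->
  inQ k z x y <-> z = box_center k (edge_top x y).
Proof.
move=> hxy hz; rewrite inQ_edge_top //; split => [hbox | -> m].
- by apply: functional_extensionality => m; apply: round2k_unique.
- exact: round2k_spec.
Qed.

End Rounding.

Lemma adj_coord_sum d (x y : point d) : adj x y ->
  coord_sum y <= coord_sum x -> edge_top x y = x.
Proof.
case=> l [hl he] hs; apply: functional_extensionality => m.
have dsum : coord_sum x - coord_sum y = x l - y l.
  rewrite /coord_sum -sumrB (bigD1 l) //= big1 ?addr0 // => m' /he ->.
  by rewrite subrr.
rewrite /edge_top; case: (eqVneq m l) => [->|/he ->]; first lia.
by rewrite maxxx.
Qed.

Lemma exists_argmax disp (T : orderType disp) n (F : nat -> T) : (0 < n)%N ->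
  exists2 i, (i < n)%N & forall j, (j < n)%N -> (F j <= F i)%O.
Proof.
move=> n_gt0.
have [i _ imax] := arg_maxP (fun i : 'I_n => F i) (isT : xpredT (Ordinal n_gt0)).
by exists i => // j jn; exact: (imax (Ordinal jn)).
Qed.

Lemma cycle_pred n i : (1 < n)%N -> (i < n)%N ->
  exists j, [/\ (j < n)%N, j <> i & ((j + 1) %% n)%N = i].
Proof.
move=> n_gt1 lt_in; case: (posnP i) => [->|i_gt0].
- by exists n.-1; rewrite addn1 prednK ?modnn; first split; lia.
- by exists i.-1; rewrite addn1 prednK ?modn_small; first split; lia.
Qed.

Theorem claim2p2 (d k : nat) (hd : (1 <= d)%N) (hk : (1 <= k)%N) :
  (forall x y : point d, adj x y ->
     exists! z : point d, lattice2k k z /\ inQ k z x y) /\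
  (forall (n : nat) (v : nat -> point d),
     (3 <= n)%N ->
     (forall i j : nat, (i < n)%N -> (j < n)%N -> v i = v j -> i = j) ->
     (forall i : nat, (i < n)%N -> adj (v i) (v ((i + 1) %% n)%N)) ->
     exists i j : nat, [/\ (i < n)%N, (j < n)%N, i <> j &
       exists z : point d, [/\ lattice2k k z,
         inQ k z (v i) (v ((i + 1) %% n)%N) & inQ k z (v j) (v ((j + 1) %% n)%N)]]).
Proof.
split=> [x y hxy | n v n_ge3 _ hadj].
  exists (box_center k (edge_top x y)); split.
    have hz := lattice2k_box_center k (edge_top x y).
    by split => //; apply/(inQ_box_center hk hxy hz).
  by move=> z [hz /(inQ_box_center hk hxy hz)].
have n_gt1 : (1 < n)%N by apply: ltnW.
have n_gt0 : (0 < n)%N by apply: ltnW.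
have [i lt_in imax] := exists_argmax (fun i => coord_sum (v i)) n_gt0.
have [j [lt_jn neq_ji ji]] := cycle_pred n_gt1 lt_in.
have adj_i := hadj i lt_in; have adj_j := hadj j lt_jn; rewrite ji in adj_j.
have top_i : edge_top (v i) (v ((i + 1) %% n)%N) = v i.
  by apply: adj_coord_sum adj_i (imax _ (ltn_pmod _ n_gt0)).
have top_j : edge_top (v j) (v i) = v i.
  by rewrite edge_topC; apply: adj_coord_sum (adj_sym adj_j) (imax _ lt_jn).
have hz := lattice2k_box_center k (v i).
exists i, j; split=> //; first exact/nesym.
exists (box_center k (v i)); split=> //.
  by apply/(inQ_box_center hk adj_i hz); rewrite top_i.
by rewrite ji; apply/(inQ_box_center hk adj_j hz); rewrite top_j.
Qed.
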